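(* Let $D$ be an integral domain and $D\subseteq T\subseteq S$ overrings of $D$. (b) Let $\star,\star',\star''$ be semistar operations on $D,T,S$ respectively. If $S$ is $(\star',\star'')$-flat over $T$ and $T$ is $(\star,\star')$-flat over $D$, then $S$ is $(\star,\star'')$-flat over $D$. (e) Let $\star_1,\star_2$ be semistar operations on $D$ with $(\star_1)_f\le(\star_2)_f$ and $\star'$ a semistar operation on $T$. If $T$ is $(\star_2,\star')$-flat over $D$, then $T$ is $(\star_1,\star')$-flat over $D$. In particular, if $\star$ is a semistar operation on $D$ with $D^\star=D$, then $T$ is $t$-flat over $(D,\star)$ if and only if $T$ is $t$-flat over $D$. (h) Let $\star,\star',\star''$ be semistar operations on $D,T,S$ respectively, and assume $S$ is $(\star,\star'')$-flat over $D$. Then $S$ is $(\star',\star'')$-flat over $T$ if and only if $S$ is $(\star',\star'')$-linked to $T$.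
   Context: Let $D$ be an integral domain with quotient field $K$. $\overline{\mathbf F}(D)$ denotes the set of all nonzero $D$-submodules of $K$ and $\mathbf f(D)$ the set of nonzero finitely generated $D$-submodules of $K$. A semistar operation on $D$ is a map $\star:\overline{\mathbf F}(D)\to\overline{\mathbf F}(D)$, $E\mapsto E^\star$, such that for all $0\ne x\in K$ and $E,F\in\overline{\mathbf F}(D)$: (1) $(xE)^\star=xE^\star$; (2) $E\subseteq F\Rightarrow E^\star\subseteq F^\star$; (3) $E\subseteq E^\star$ and $(E^\star)^\star=E^\star$. $\star_1\le\star_2$ means $E^{\star_1}\subseteq E^{\star_2}$ for all $E$. $\star_f$ is defined by $E^{\star_f}=\bigcup\{F^\star:F\in\mathbf f(D),F\subseteq E\}$. A nonzero ideal $I$ of $D$ is a quasi-$\star$-ideal if $I^\star\cap D=I$; a quasi-$\star$-prime is a prime quasi-$\star$-ideal. An overring of $D$ is a ring $T$ with $D\subseteq T\subseteq K$; all notions are defined analogously on $T$ (and on overrings of $T$ relative to $T$). For an overring $T$, $v_T$ is $E\mapsto(T:_K(T:_KE))$ and $t_T:=(v_T)_f$. $T$ is $(\star,\star')$-linked to $D$ if for every nonzero finitely generated ideal $F\subseteq D$ with $F^\star=D^\star$ one has $(FT)^{\star'}=T^{\star'}$. $T$ is $(\star,\star')$-flat over $D$ if $T$ is $(\star,\star')$-linked to $D$ and $D_{Q\cap D}=T_Q$ for every quasi-$\star'_f$-prime ideal $Q$ of $T$. $T$ is $t$-flat over $(D,\star)$ if it is $(\star,t_T)$-flat over $D$, and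 $t$-flat over $D$ if it is $(t_D,t_T)$-flat over $D$. *)

From mathcomp Require Import all_boot all_algebra.
Set Implicit Arguments.
Unset Strict Implicit.
Unset Printing Implicit Defensive.
Import GRing.Theory.
Local Open Scope ring_scope.

(* Everything lives inside a fixed field K, the quotient field of D. A semistar operation is a map on
   predicates whose axioms are required on F-bar(R) only. *)

Section Defs.
Variable K : fieldType.

Definition subset (A B : K -> Prop) := forall x, A x -> B x.
Definition seteq (A B : K -> Prop) := forall x, A x <-> B x.
Definition inter (A B : K -> Prop) := fun x => A x /\ B x.

Definition subring (R : K -> Prop) :=
  [/\ R 0, R 1, (forall x y, R x -> R y -> R (x - y))
    & (forall x y, R x -> R y -> R (x * y))].

Definition is_quotient_field_of (D : K -> Prop) :=
  forall x : K, exists a b, [/\ D a, D b, b != 0 & x = a / b].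

Definition overring (D T : K -> Prop) := subring T /\ subset D T.

Definition submodule (R E : K -> Prop) :=
  [/\ E 0, (forall x y, E x -> E y -> E (x + y))
    & (forall r x, R r -> E x -> E (r * x))].
Definition nonzero (E : K -> Prop) := exists x, E x /\ x != 0.
Definition Fbar (R E : K -> Prop) := submodule R E /\ nonzero E.

Fixpoint span (R : K -> Prop) (s : seq K) : K -> Prop :=
  match s with
  | [::] => fun x => x = 0
  | a :: s' => fun x => exists r y, [/\ R r, span R s' y & x = r * a + y]
  end.
Definition fin_gen (R E : K -> Prop) := exists s, seteq E (span R s).
Definition ffg (R E : K -> Prop) := Fbar R E /\ fin_gen R E.

Definition scale (x : K) (E : K -> Prop) := fun y => exists e, E e /\ y = x * e.

Definition semistar (R : K -> Prop) (st : (K -> Prop) -> (K -> Prop)) :=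
  [/\ (forall E, Fbar R E -> Fbar R (st E)),
      (forall x E, x != 0 -> Fbar R E -> seteq (st (scale x E)) (scale x (st E))),
      (forall E F, Fbar R E -> Fbar R F -> subset E F -> subset (st E) (st F))
    & (forall E, Fbar R E -> subset E (st E) /\ seteq (st (st E)) (st E))].

Definition star_f (R : K -> Prop) (st : (K -> Prop) -> (K -> Prop)) :=
  fun E => fun x => exists F, [/\ ffg R F, subset F E & st F x].

Definition le_star (R : K -> Prop) (st1 st2 : (K -> Prop) -> (K -> Prop)) :=
  forall E, Fbar R E -> subset (st1 E) (st2 E).

Definition ideal (R I : K -> Prop) := submodule R I /\ subset I R.
Definition prime_ideal (R P : K -> Prop) :=
  [/\ ideal R P, exists x, R x /\ ~ P x
    & forall x y, R x -> R y -> P (x * y) -> P x \/ P y].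
Definition quasi_ideal (R : K -> Prop) st (I : K -> Prop) :=
  [/\ ideal R I, nonzero I & seteq (inter (st I) R) I].
Definition quasi_prime (R : K -> Prop) st (P : K -> Prop) :=
  quasi_ideal R st P /\ prime_ideal R P.

Definition extend (T F : K -> Prop) := fun x =>
  exists s : seq (K * K), (forall p, p \in s -> F p.1 /\ T p.2) /\
                          x = \sum_(p <- s) p.1 * p.2.

Definition loc (R P : K -> Prop) := fun x =>
  exists a b, [/\ R a, R b, ~ P b & x = a / b].

Definition linked (D T : K -> Prop) st st' :=
  forall F, ideal D F -> nonzero F -> fin_gen D F ->
    seteq (st F) (st D) -> seteq (st' (extend T F)) (st' T).

Definition flat (D T : K -> Prop) st st' :=
  linked D T st st' /\
  forall Q, quasi_prime T (star_f T st') Q -> seteq (loc D (inter Q D)) (loc T Q).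

Definition colon (T E : K -> Prop) := fun x => forall e, E e -> T (x * e).
Definition vop (T : K -> Prop) := fun E => colon T (colon T E).
Definition top (T : K -> Prop) := star_f T (vop T).

Definition t_flat_over (D T : K -> Prop) st := flat D T st (top T).
Definition t_flat (D T : K -> Prop) := flat D T (top D) (top T).

End Defs.

From Pilot Require Import Defs.
From mathcomp Require Import all_boot all_algebra.
From mathcomp Require Import ring.
From mathcomp Require boolp classical_sets.
From Stdlib Require Import Classical.
Import Pilot.Defs.
Set Implicit Arguments.
Unset Strict Implicit.
Unset Printing Implicit Defensive.
Import GRing.Theory.
Local Open Scope ring_scope.

(* The engine is that the finite-type companion [star_f R st] of a semistar
   operation is again a finite-type closure (monotone, idempotent, compatible
   with scaling), so by Zorn every nonzero ideal [I] with [1 \notin I^{st_f}]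
   lies in an ideal maximal for this property, and such a maximal ideal is a
   quasi-[st_f]-prime.

   (b): for a quasi-[st''_f]-prime [Q] of [S], linkedness of [S] over [T] makes
   [Q \cap T] non-[st'_f]-full, so it lies in a quasi-[st'_f]-prime [M] of [T];
   as [T \subseteq T_M = D_{M \cap D}], every fraction of [S_Q = T_{Q \cap T}]
   can be rewritten with numerator and denominator in [D].
   (e): only linkedness depends on the operation on [D], and for finitely
   generated [F], [1 \in F^{st_1}] gives [1 \in F^{(st_1)_f} \subseteq F^{st_2}].
   "In particular": if [D^st = D] then [st \le v_D], which gives one direction
   by (e); conversely, if [y (FT) \subseteq T] with [y \notin T], the conductor
   [{t | t y \in T}] lies in a quasi-[t]-prime [M] of [T], and clearing
   denominators in [D_{M \cap D} = T_M] puts [u y] in [F^{-1} = D] for some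
   [u \notin M]; then [y = a/b] with [b \notin M], yet [b] lies in the conductor.
   (h): [D_{Q \cap D} \subseteq T_{Q \cap T} \subseteq S_Q]. *)

Section Modules.
Variable K : fieldType.
Implicit Types (R T E F G : K -> Prop) (s : seq K).

Lemma subring0 R : subring R -> R 0. Proof. by case. Qed.
Lemma subring1 R : subring R -> R 1. Proof. by case. Qed.
Lemma subringB R x y : subring R -> R x -> R y -> R (x - y).
Proof. by case=> _ _ H _; apply: H. Qed.
Lemma subringM R x y : subring R -> R x -> R y -> R (x * y).
Proof. by case=> _ _ _ H; apply: H. Qed.
Lemma subringD R x y : subring R -> R x -> R y -> R (x + y).
Proof.
move=> HR Hx Hy; rewrite -[y]opprK -[- y]sub0r.
by apply: subringB => //; apply: subringB => //; apply: subring0.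
Qed.

Lemma submodule0 R E : submodule R E -> E 0. Proof. by case. Qed.
Lemma submoduleD R E x y : submodule R E -> E x -> E y -> E (x + y).
Proof. by case=> _ H _; apply: H. Qed.
Lemma submoduleZ R E r x : submodule R E -> R r -> E x -> E (r * x).
Proof. by case=> _ _ H; apply: H. Qed.

Lemma submodule_ring R : subring R -> submodule R R.
Proof.
by move=> HR; split=> [|x y|r x]; [apply: subring0 | apply: subringD | apply: subringM].
Qed.

Lemma Fbar_ring R : subring R -> Fbar R R.
Proof.
move=> HR; split; first exact: submodule_ring.
by exists 1; split; [apply: subring1 | apply: oner_neq0].
Qed.

Lemma submodule_sub R T E : subset R T -> submodule T E -> submodule R E.
Proof. by move=> RT [H0 HD HZ]; split=> // r x /RT; apply: HZ. Qed.

Lemma submodule_seteq R E F : seteq E F -> submodule R E -> submodule R F.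
Proof.
move=> EF [H0 HD HZ]; split; first exact/EF.
- by move=> a b /EF Ha /EF Hb; apply/EF; apply: HD.
- by move=> r a Hr /EF Ha; apply/EF; apply: HZ.
Qed.

Lemma sub_submodule_of1 R E : subring R -> submodule R E -> E 1 -> subset R E.
Proof. by move=> HR HE E1 r Hr; rewrite -[r]mulr1; apply: submoduleZ HE Hr E1. Qed.

Lemma submodule_scale R y E : submodule R E -> submodule R (scale y E).
Proof.
move=> [H0 HD HZ]; split.
- by exists 0; rewrite mulr0.
- by move=> _ _ [a [Ha ->]] [b [Hb ->]]; exists (a + b); rewrite mulrDr; split => //; apply: HD.
- by move=> r _ Hr [a [Ha ->]]; exists (r * a); rewrite mulrCA; split => //; apply: HZ.
Qed.

Lemma Fbar_scale R y E : y != 0 -> Fbar R E -> Fbar R (scale y E).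
Proof.
move=> yn [HE [e [He en]]]; split; first exact: submodule_scale.
by exists (y * e); split; [exists e | rewrite mulf_neq0].
Qed.

Lemma span_submodule R s : subring R -> submodule R (span R s).
Proof.
move=> HR; elim: s => [|a s [IH0 IHD IHZ]] /=.
  by split=> [|x y -> ->|r x _ ->]; rewrite ?addr0 ?mulr0.
split.
- by exists 0, 0; split => //; [apply: subring0 | rewrite mul0r addr0].
- move=> _ _ [r1 [y1 [Hr1 Hy1 ->]]] [r2 [y2 [Hr2 Hy2 ->]]].
  by exists (r1 + r2), (y1 + y2); split; [apply: subringD | apply: IHD | ring].
- move=> r _ Hr [r1 [y1 [Hr1 Hy1 ->]]].
  by exists (r * r1), (r * y1); split; [apply: subringM | apply: IHZ | ring].
Qed.

Lemma mem_span R s a : subring R -> a \in s -> span R s a.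
Proof.
move=> HR; elim: s => //= b s IH; rewrite inE => /predU1P [-> | Ha].
  by exists 1, 0; split; [apply: subring1 | apply: submodule0 (span_submodule s HR) | ring].
by exists 0, a; split; [apply: subring0 | apply: IH | ring].
Qed.

Lemma span_min R E s : subring R -> submodule R E -> {in s, forall a, E a} ->
  subset (span R s) E.
Proof.
move=> HR HE; elim: s => [|a s IH] Es x /=; first by move=> ->; apply: submodule0 HE.
move=> [r [y [Hr Hy ->]]]; apply: (submoduleD HE).
  by apply: (submoduleZ HE Hr); apply: Es; rewrite inE eqxx.
by apply: IH Hy => b Hb; apply: Es; rewrite inE Hb orbT.
Qed.

Lemma span_subset R s1 s2 : subring R -> {subset s1 <= s2} ->
  subset (span R s1) (span R s2).
Proof.
move=> HR s12; apply: (span_min HR (span_submodule _ HR)) => a /s12.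
exact: mem_span.
Qed.

Lemma scale_span R y s : subring R ->
  seteq (scale y (span R s)) (span R (map (fun a => y * a) s)).
Proof.
move=> HR x; split.
  move=> [g [Hg ->]]; elim: s g Hg => [|a s IH] g /=; first by move=> ->; rewrite mulr0.
  move=> [r [z [Hr Hz ->]]]; exists r, (y * z); split => //; first exact: IH.
  ring.
apply: (span_min HR (submodule_scale y (span_submodule s HR))) => _ /mapP [a Ha ->].
by exists a; split => //; apply: mem_span.
Qed.

Lemma ffg_span R s a : subring R -> a \in s -> a != 0 -> ffg R (span R s).
Proof.
move=> HR Ha an; split; last by exists s.
by split; [apply: span_submodule | exists a; split => //; apply: mem_span].
Qed.

Lemma ffg_ring R : subring R -> ffg R R.
Proof.
move=> HR; split; first exact: Fbar_ring.
exists [:: 1] => x /=; split; first by exists x, 0; rewrite mulr1 addr0.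
by move=> [r [y [Hr -> ->]]]; rewrite mulr1 addr0.
Qed.

Lemma ffg_join R E F1 F2 : subring R -> submodule R E -> ffg R F1 -> ffg R F2 ->
  subset F1 E -> subset F2 E ->
  exists H, [/\ ffg R H, subset H E, subset F1 H & subset F2 H].
Proof.
move=> HR HE [[_ [x [F1x xn]]] [s1 Fs1]] [_ [s2 Fs2]] F1E F2E.
have F1H : subset F1 (span R (s1 ++ s2)).
  by move=> y /Fs1; apply: span_subset => // a Ha; rewrite mem_cat Ha.
have F2H : subset F2 (span R (s1 ++ s2)).
  by move=> y /Fs2; apply: span_subset => // a Ha; rewrite mem_cat Ha orbT.
exists (span R (s1 ++ s2)); split => //.
  split; last by exists (s1 ++ s2).
  by split; [apply: span_submodule | exists x; split => //; apply: F1H].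
apply: span_min => // a; rewrite mem_cat => /orP [] /(mem_span HR).
  by move/Fs1/F1E.
by move/Fs2/F2E.
Qed.

End Modules.

Section Semistar.
Variables (K : fieldType) (R : K -> Prop) (st : (K -> Prop) -> K -> Prop).
Hypotheses (HR : subring R) (Hst : semistar R st).
Implicit Types (E F G : K -> Prop) (s : seq K).

Lemma star_Fbar E : Fbar R E -> Fbar R (st E).
Proof. by case: Hst => H _ _ _; apply: H. Qed.

Lemma star_submodule E : Fbar R E -> submodule R (st E).
Proof. by case/star_Fbar. Qed.

Lemma star_mono E F : Fbar R E -> Fbar R F -> subset E F -> subset (st E) (st F).
Proof. by case: Hst => _ _ H _; apply: H. Qed.

Lemma star_ext E : Fbar R E -> subset E (st E).
Proof. by case: Hst => _ _ _ H /H []. Qed.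

Lemma star_idem E : Fbar R E -> subset (st (st E)) (st E).
Proof. by case: Hst => _ _ _ H /H [_ H2] x /H2. Qed.

Lemma star_scale y E : y != 0 -> Fbar R E -> seteq (st (scale y E)) (scale y (st E)).
Proof. by case: Hst => _ H _ _; apply: H. Qed.

Lemma star_seteq E F : Fbar R E -> Fbar R F -> seteq E F -> seteq (st E) (st F).
Proof. by move=> FE FF EF x; split; apply: star_mono => // y /EF. Qed.

Lemma star_full_of1 E : Fbar R E -> subset E R -> st E 1 -> seteq (st E) (st R).
Proof.
move=> FE ER E1 x; split; first exact: (star_mono FE (Fbar_ring HR) ER).
have R_stE : subset R (st E) by apply: sub_submodule_of1 (star_submodule FE) E1.
by move/(star_mono (Fbar_ring HR) (star_Fbar FE) R_stE)/(star_idem FE).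
Qed.

Local Notation stf := (star_f R st).

Lemma star_f_mono E F : subset E F -> subset (stf E) (stf F).
Proof. by move=> EF x [G [fG GE Gx]]; exists G; split => // y /GE /EF. Qed.

Lemma star_f_sub E : Fbar R E -> subset (stf E) (st E).
Proof. by move=> FE x [G [[FG _] GE Gx]]; apply: (star_mono FG FE GE). Qed.

Lemma star_f_ffg E : ffg R E -> seteq (stf E) (st E).
Proof.
move=> fE x; split; first exact: (star_f_sub fE.1).
by move=> Ex; exists E; split.
Qed.

Lemma sub_star_f E : Fbar R E -> subset E (stf E).
Proof.
move=> [HE [e [Ee en]]] x Ex; have e2 : e \in [:: e; x] by rewrite inE eqxx.
have fG := ffg_span HR e2 en.
exists (span R [:: e; x]); split => //.
  by apply: span_min => // a; rewrite !inE => /orP [] /eqP ->.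
by apply: (star_ext fG.1); apply: mem_span; rewrite // !inE eqxx orbT.
Qed.

Lemma star_f_directed E s : Fbar R E -> {in s, forall a, stf E a} ->
  exists F, [/\ ffg R F, subset F E & {in s, forall a, st F a}].
Proof.
move=> FE; elim: s => [|a s IH] Es.
  have [e [Ee en]] := FE.2; exists (span R [:: e]); split => //.
    exact: ffg_span (mem_head _ _) en.
  by apply: span_min => [||b] //; [case: FE | rewrite inE => /eqP ->].
have [F1 [fF1 F1E F1a]] := Es a (mem_head _ _).
have /IH [F2 [fF2 F2E F2s]] : {in s, forall b, stf E b}.
  by move=> b Hb; apply: Es; rewrite inE Hb orbT.
have [H [fH HE F1H F2H]] := ffg_join HR FE.1 fF1 fF2 F1E F2E.
exists H; split => // b; rewrite inE => /predU1P [-> | Hb].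
  exact: star_mono fF1.1 fH.1 F1H _ F1a.
exact: star_mono fF2.1 fH.1 F2H _ (F2s b Hb).
Qed.

Lemma star_f_idem E : Fbar R E -> subset (stf (stf E)) (stf E).
Proof.
move=> FE x [G [[FG [s Gs]] GE Gx]].
have [F [fF FE' Fs]] : exists F, [/\ ffg R F, subset F E & {in s, forall a, st F a}].
  by apply: star_f_directed => // a /(mem_span HR) /Gs /GE.
have GF : subset G (st F).
  by move=> y /Gs; apply: span_min => //; apply: star_submodule; case: fF.
exists F; split => //; apply: star_idem; first by case: fF.
by apply: star_mono GF _ Gx => //; apply: star_Fbar; case: fF.
Qed.

Lemma star_f_submodule E : Fbar R E -> submodule R (stf E).
Proof.
move=> FE; split.
- by apply: sub_star_f => //; apply: submodule0 FE.1.
- move=> x y Ex Ey.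
  have [|F [fF FE' Fxy]] := @star_f_directed E [:: x; y] FE.
    by move=> a; rewrite !inE => /orP [] /eqP ->.
  exists F; split => //; apply: submoduleD (star_submodule fF.1) _ _.
    by apply: Fxy; rewrite inE eqxx.
  by apply: Fxy; rewrite !inE eqxx orbT.
- move=> r x Rr [F [fF FE' Fx]]; exists F; split => //.
  exact: submoduleZ (star_submodule fF.1) Rr Fx.
Qed.

Lemma scale_star_f y E : y != 0 -> subset (scale y (stf E)) (stf (scale y E)).
Proof.
move=> yn _ [x [[F [[FF [s Fs]] FE Fx]] ->]].
have ySF : seteq (scale y F) (span R (map (fun a => y * a) s)).
  move=> z; rewrite -(scale_span _ _ HR).
  by split=> -[f [Hf ->]]; exists f; split => //; apply/Fs.
exists (scale y F); split.
- by split; [apply: Fbar_scale | exists (map (fun a => y * a) s)].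
- by move=> _ [f [Ff ->]]; exists f; split => //; apply: FE.
- by apply/(star_scale yn FF); exists x.
Qed.

End Semistar.

Section Extension.
Variable K : fieldType.
Implicit Types (R T S F Q : K -> Prop) (s : seq K).

Lemma mem_extend T F f : subring T -> F f -> extend T F f.
Proof.
move=> HT Ff; exists [:: (f, 1)]; rewrite big_seq1 mulr1; split => // p.
by rewrite inE => /eqP -> /=; split => //; apply: subring1.
Qed.

Lemma extend_min S F Q : submodule S Q -> subset F Q -> subset (extend S F) Q.
Proof.
move=> HQ FQ _ [l [Hl ->]]; elim: l Hl => [|p l IH] Hl.
  by rewrite big_nil; apply: submodule0 HQ.
rewrite big_cons; apply: (submoduleD HQ).
  by have [Fp Sp] := Hl p (mem_head _ _); rewrite mulrC; apply: (submoduleZ HQ) => //; apply: FQ.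
by apply: IH => q Hq; apply: Hl; rewrite inE Hq orbT.
Qed.

Lemma extend_span R T F s : subring R -> subring T -> subset R T ->
  seteq F (span R s) -> seteq (extend T F) (span T s).
Proof.
move=> HR HT RT Fs x; split.
  apply: (extend_min (span_submodule s HT)) => y /Fs.
  apply: (span_min HR (submodule_sub RT (span_submodule s HT))) => a.
  exact: mem_span.
have : {in s, forall a, F a} by move=> a /(mem_span HR) /Fs.
elim: s x {Fs} => [|a s IH] x Fs /=.
  by move=> ->; exists [::]; rewrite big_nil.
move=> [r [y [Tr Hy ->]]].
have Fs' : {in s, forall b, F b} by move=> b Hb; apply: Fs; rewrite inE Hb orbT.
have [l [Hl ->]] := IH y Fs' Hy.
exists ((a, r) :: l); rewrite big_cons mulrC; split => // p.
rewrite inE => /predU1P [-> | Hp]; last exact: Hl.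
by split => //; apply: Fs; rewrite inE eqxx.
Qed.

Lemma ffg_extend R T F : subring R -> subring T -> subset R T ->
  fin_gen R F -> nonzero F -> ffg T (extend T F).
Proof.
move=> HR HT RT [s Fs] [f [Ff fn]]; have FTs := extend_span HR HT RT Fs.
split; last by exists s.
split; last by exists f; split => //; apply: mem_extend.
apply: submodule_seteq (span_submodule s HT) => x.
by split => /FTs.
Qed.

Lemma extend_extend R T S F s : subring R -> subring T -> subring S ->
  subset R T -> subset T S -> seteq F (span R s) ->
  seteq (extend S (extend T F)) (extend S F).
Proof.
move=> HR HT HS RT TS Fs x.
have RS : subset R S by move=> y /RT /TS.
have e1 := extend_span HT HS TS (extend_span HR HT RT Fs).
have e2 := extend_span HR HS RS Fs.
by split => [/e1/e2 | /e2/e1].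
Qed.

End Extension.

Lemma Zorn_above (T : Type) (P : (T -> Prop) -> Prop) (A0 : T -> Prop) : P A0 ->
  (forall C : (T -> Prop) -> Prop, (exists A, C A) -> (forall A, C A -> P A) ->
     (forall A B, C A -> C B -> (forall x, A x -> B x) \/ (forall x, B x -> A x)) ->
     P (fun x => exists2 A, C A & A x)) ->
  exists M, [/\ P M, forall x, A0 x -> M x &
    forall B, (forall x, M x -> B x) -> P B -> forall x, B x -> M x].
Proof.
move=> PA0 Pchain.
pose U := {A : T -> Prop | P A /\ forall x, A0 x -> A x}.
pose le (a b : U) := boolp.asbool (forall x, sval a x -> sval b x).
pose u0 : U := exist _ A0 (conj PA0 (fun x h => h)).
have [||C Ctot|M Mmax] := classical_sets.ZL_preorder u0 (R := le).
- by move=> a; apply/boolp.asboolP.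
- by move=> a b c /boolp.asboolP ab /boolp.asboolP bc; apply/boolp.asboolP => x /ab /bc.
- case: (classic (exists a, C a)) => [[a Ca] | noC]; last first.
    by exists u0 => a Ca; case: noC; exists a.
  pose CA := fun A => exists2 b : U, C b & sval b = A.
  have PU : P (fun x => exists2 A, CA A & A x).
    apply: Pchain; first by exists (sval a), a.
      by move=> _ [b _ <-]; case: (svalP b).
    move=> _ _ [b Cb <-] [c Cc <-].
    by case: (Ctot b c Cb Cc) => /boolp.asboolP; [left | right].
  have A0U : forall x, A0 x -> exists2 A, CA A & A x.
    by move=> x A0x; exists (sval a); [exists a | case: (svalP a) => _; apply].
  exists (exist _ (fun x => exists2 A, CA A & A x) (conj PU A0U)) => b Cb.
  by apply/boolp.asboolP => x bx /=; exists (sval b) => //; exists b.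
- exists (sval M); case: (svalP M) => PM A0M; split => // B MB PB.
  have A0B : forall x, A0 x -> B x by move=> x /A0M /MB.
  have BM : le (exist _ B (conj PB A0B)) M by apply: Mmax; apply/boolp.asboolP.
  by move/boolp.asboolP: BM.
Qed.

Section QuasiPrime.
Variables (K : fieldType) (R : K -> Prop) (st : (K -> Prop) -> K -> Prop).
Hypotheses (HR : subring R) (Hst : semistar R st).
Implicit Types (I J M E : K -> Prop).
Local Notation stf := (star_f R st).

Definition adjoin M x := fun z => exists m t, [/\ M m, R t & z = m + x * t].

Lemma adjoin_ideal M x : ideal R M -> R x -> ideal R (adjoin M x).
Proof.
move=> [HM MR] Rx; split; last first.
  by move=> _ [m [t [Mm Rt ->]]]; apply: subringD (MR _ Mm) (subringM HR Rx Rt).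
split.
- by exists 0, 0; split; [apply: submodule0 HM | apply: subring0 | rewrite mulr0 addr0].
- move=> _ _ [m1 [t1 [Mm1 Rt1 ->]]] [m2 [t2 [Mm2 Rt2 ->]]].
  by exists (m1 + m2), (t1 + t2); split; [apply: submoduleD HM _ _ | apply: subringD | ring].
- move=> r _ Rr [m [t [Mm Rt ->]]].
  by exists (r * m), (r * t); split; [apply: submoduleZ HM _ _ | apply: subringM | ring].
Qed.

Lemma sub_adjoin M x : subset M (adjoin M x).
Proof. by move=> m Mm; exists m, 0; split => //; [apply: subring0 | rewrite mulr0 addr0]. Qed.

Lemma adjoin_min M x E : submodule R E -> subset M E -> E x -> subset (adjoin M x) E.
Proof.
move=> HE ME Ex _ [m [t [Mm Rt ->]]]; rewrite mulrC.
exact: submoduleD HE (ME _ Mm) (submoduleZ HE Rt Ex).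
Qed.

Lemma quasi_prime_of_maximal M : ideal R M -> nonzero M -> ~ stf M 1 ->
  (forall x, R x -> ~ M x -> stf (adjoin M x) 1) -> quasi_prime R stf M.
Proof.
move=> idM nzM nM1 Mmax; have FM : Fbar R M by split; [case: idM |].
have M_stf := sub_star_f HR Hst FM.
have quasiM : seteq (inter (stf M) R) M.
  move=> x; split => [[stf_x Rx] | Mx]; last by split; [apply: M_stf | apply: idM.2].
  apply: NNPP => /(Mmax x Rx) adj1; apply: nM1; apply: (star_f_idem HR Hst FM).
  exact: (star_f_mono (adjoin_min (star_f_submodule HR Hst FM) M_stf stf_x) adj1).
split; split => //.
  by exists 1; split; [apply: subring1 | move/M_stf].
move=> x y Rx Ry Mxy; case: (classic (M x)) => [Mx | nMx]; [by left | right].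
have [-> | yn] := eqVneq y 0; first exact: submodule0 idM.1.
have y_adj : stf (scale y (adjoin M x)) y.
  by apply: (scale_star_f HR Hst yn); exists 1; rewrite mulr1; split => //; apply: Mmax.
have yadjM : subset (scale y (adjoin M x)) M.
  move=> _ [_ [[m [t [Mm Rt ->]]] ->]].
  have -> : y * (m + x * t) = y * m + t * (x * y) by ring.
  by apply: submoduleD idM.1 _ _; apply: submoduleZ idM.1 _ _.
by apply/quasiM; split => //; apply: (star_f_mono yadjM y_adj).
Qed.

Lemma chain_ideal (C : (K -> Prop) -> Prop) : (exists A, C A) -> (forall A, C A -> ideal R A) ->
  (forall A B, C A -> C B -> subset A B \/ subset B A) ->
  ideal R (fun x => exists2 A, C A & A x).
Proof.
move=> [A0 CA0] Cid Ctot; split; last by move=> x [A /Cid [_ AR] /AR].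
split.
- by exists A0 => //; apply: submodule0 (Cid _ CA0).1.
- move=> x y [A CA Ax] [B CB By].
  case: (Ctot A B CA CB) => [AB | BA].
    by exists B => //; apply: submoduleD (Cid _ CB).1 (AB _ Ax) By.
  by exists A => //; apply: submoduleD (Cid _ CA).1 Ax (BA _ By).
- by move=> r x Rr [A CA Ax]; exists A => //; apply: submoduleZ (Cid _ CA).1 Rr Ax.
Qed.

Lemma chain_mem_seq (C : (K -> Prop) -> Prop) (s : seq K) : (exists A, C A) ->
  (forall A B, C A -> C B -> subset A B \/ subset B A) ->
  {in s, forall a, exists2 A, C A & A a} -> exists2 A, C A & {in s, forall a, A a}.
Proof.
move=> [A0 CA0] Ctot; elim: s => [|a s IH] Cs; first by exists A0.
have [B CB Ba] := Cs a (mem_head _ _).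
have [|A CA As] := IH; first by move=> b Hb; apply: Cs; rewrite inE Hb orbT.
case: (Ctot A B CA CB) => [AB | BA].
  by exists B => // b; rewrite inE => /predU1P [-> // | /As /AB].
by exists A => // b; rewrite inE => /predU1P [-> | /As //]; apply: BA.
Qed.

Lemma chain_not_full (C : (K -> Prop) -> Prop) : (exists A, C A) ->
  (forall A, C A -> ideal R A /\ ~ stf A 1) ->
  (forall A B, C A -> C B -> subset A B \/ subset B A) ->
  ~ stf (fun x => exists2 A, C A & A x) 1.
Proof.
move=> Cne CP Ctot [G [[FG [s Gs]] GU G1]].
have [A CA As] := chain_mem_seq Cne Ctot (fun a Ha => GU a (proj2 (Gs a) (mem_span HR Ha))).
have [[HA _] nA1] := CP _ CA; apply: nA1; exists G; split => //; first by split => //; exists s.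
by move=> x /Gs; apply: span_min.
Qed.

Lemma exists_quasi_prime I : ideal R I -> nonzero I -> ~ stf I 1 ->
  exists M, quasi_prime R stf M /\ subset I M.
Proof.
move=> idI nzI nI1.
have [||M [[idM _ nM1] IM Mmax]] :=
  @Zorn_above K (fun J => [/\ ideal R J, subset I J & ~ stf J 1]) I.
- by split.
- move=> C Cne CP Ctot; have [A CA] := Cne; split.
  + by apply: chain_ideal => // B /CP [].
  + by move=> x Ix; exists A => //; have [_ IA _] := CP _ CA; apply: IA.
  + by apply: chain_not_full => // B /CP [].
exists M; split => //; apply: quasi_prime_of_maximal => //.
  by case: nzI => x [/IM Mx xn]; exists x.
move=> x Rx nMx; apply: NNPP => nadj; apply: nMx.
apply: (Mmax (adjoin M x) (@sub_adjoin M x)).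
- by split => //; [apply: adjoin_ideal | move=> y /IM /sub_adjoin].
- by exists 0, 1; split => //; [apply: submodule0 idM.1 | apply: subring1 | ring].
Qed.

End QuasiPrime.

Section Localization.
Variable K : fieldType.
Implicit Types (R T D S P Q M : K -> Prop).

Lemma prime_ideal0 R P : prime_ideal R P -> P 0.
Proof. by case=> -[HP _] _ _; apply: submodule0 HP. Qed.

Lemma prime_ideal_not1 R P : prime_ideal R P -> ~ P 1.
Proof.
case=> -[HP _] [x [Rx nPx]] _ P1; apply: nPx.
by rewrite -[x]mulr1; apply: submoduleZ HP Rx P1.
Qed.

Lemma prime_idealMN R P x y : prime_ideal R P -> R x -> R y -> ~ P x -> ~ P y -> ~ P (x * y).
Proof. by case=> _ _ Hpr Rx Ry nPx nPy /(Hpr x y Rx Ry) []. Qed.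

Lemma loc_mono R R' P P' : subset R R' -> (forall b, R b -> ~ P b -> ~ P' b) ->
  subset (loc R P) (loc R' P').
Proof.
move=> RR' PP' _ [a [b [Ra Rb nPb ->]]].
by exists a, b; split; [apply: RR' | apply: RR' | apply: PP'|].
Qed.

Lemma sub_loc R P : subring R -> ~ P 1 -> subset R (loc R P).
Proof. by move=> HR nP1 x Rx; exists x, 1; rewrite divr1; split => //; apply: subring1. Qed.

Lemma loc_common_denominator D T M (s : seq K) :
  subring D -> subset D T -> prime_ideal T M -> {in s, forall a, loc D (inter M D) a} ->
  exists u, [/\ D u, ~ M u & {in s, forall a, D (u * a)}].
Proof.
move=> HD DT prM; elim: s => [|a s IH] Hs.
  by exists 1; split => //; [apply: subring1 | apply: prime_ideal_not1 prM].
have [|u [Du nMu Hu]] := IH; first by move=> b Hb; apply: Hs; rewrite inE Hb orbT.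
have [c [d [Dc Dd nMd ->]]] := Hs a (mem_head _ _).
have {}nMd : ~ M d by move=> Md; apply: nMd.
have dn : d != 0 by apply/eqP => d0; apply: nMd; rewrite d0; apply: prime_ideal0 prM.
exists (d * u); split; first exact: subringM.
  exact: prime_idealMN prM (DT _ Dd) (DT _ Du) nMd nMu.
move=> b; rewrite inE => /predU1P [-> | /Hu Db].
  by rewrite mulrAC [d * _]mulrC divfK //; apply: subringM.
by rewrite -mulrA; apply: subringM.
Qed.

Lemma loc_sub_loc D T S Q M : subring D -> subset D T -> subset T S -> prime_ideal S Q ->
  subset (inter Q T) M -> subset T (loc D (inter M D)) ->
  subset (loc T (inter Q T)) (loc D (inter Q D)).
Proof.
move=> HD DT TS prQ QM Tloc _ [a [b [Ta Tb nQb ->]]].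
have {}nQb : ~ Q b by move=> Qb; apply: nQb.
have nQ_of_nM d : D d -> ~ inter M D d -> ~ Q d.
  by move=> Dd nMd Qd; apply: nMd; split => //; apply: QM; split => //; apply: DT.
have nz d : ~ Q d -> d != 0.
  by move=> nQd; apply/eqP => d0; apply: nQd; rewrite d0; apply: prime_ideal0 prQ.
have [a1 [d1 [Da1 Dd1 /(nQ_of_nM _ Dd1) nQd1 ->]]] := Tloc _ Ta.
have [c [d [Dc Dd /(nQ_of_nM _ Dd) nQd eb]]] := Tloc _ Tb.
have ec : c = b * d by rewrite eb divfK //; apply: nz.
have nQc : ~ Q c by rewrite ec; apply: prime_idealMN prQ (TS _ Tb) (TS _ (DT _ Dd)) nQb nQd.
have nQcd1 : ~ Q (c * d1).
  exact: prime_idealMN prQ (TS _ (DT _ Dc)) (TS _ (DT _ Dd1)) nQc nQd1.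
exists (a1 * d), (c * d1); split; [exact: subringM | exact: subringM | by case | ].
by rewrite eb; field; rewrite !nz //; rewrite -eb.
Qed.

End Localization.

Section Divisorial.
Variable K : fieldType.
Implicit Types (R D T E F G M : K -> Prop).

Lemma vop_semistar T : subring T -> semistar T (vop T).
Proof.
move=> HT.
have ext E : subset E (vop T E) by move=> e Ee y Hy; rewrite mulrC; apply: Hy.
have mono E F : subset E F -> subset (vop T E) (vop T F).
  by move=> EF x Hx y Hy; apply: Hx => e /EF; apply: Hy.
split.
- move=> E [_ [e [Ee en]]]; split; last by exists e; split => //; apply: ext.
  split.
  + by move=> y _; rewrite mul0r; apply: subring0.
  + by move=> a b Ha Hb y Hy; rewrite mulrDl; apply: subringD => //; [apply: Ha | apply: Hb].
  + by move=> r a Tr Ha y Hy; rewrite -mulrA; apply: subringM => //; apply: Ha.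
- move=> x E xn _ z; split.
    move=> Hz; exists (z / x); split; last by rewrite mulrCA mulfV // mulr1.
    move=> y Hy; rewrite mulrAC -mulrA; apply: Hz => _ [e [Ee ->]].
    by rewrite mulrA divfK //; apply: Hy.
  move=> [w [Hw ->]] y Hy; rewrite -mulrA mulrCA; apply: Hw => e Ee.
  by rewrite -mulrA mulrCA; apply: Hy; exists e.
- by move=> E F _ _; apply: mono.
- move=> E _; split; first exact: ext.
  move=> z; split; last by apply: ext.
  by move=> Hz y Hy; apply: Hz => w Hw; rewrite mulrC; apply: Hw.
Qed.

Lemma star_f_top T E : seteq (star_f T (top T) E) (top T E).
Proof.
move=> x; split.
  by move=> [F [fF FE [G [fG GF Gx]]]]; exists G; split => // g /GF /FE.
by move=> [G [fG GE Gx]]; exists G; split => //; exists G; split.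
Qed.

Lemma quasi_prime_seteq R (c1 c2 : (K -> Prop) -> K -> Prop) M :
  (forall E, seteq (c1 E) (c2 E)) -> quasi_prime R c1 M -> quasi_prime R c2 M.
Proof.
move=> c12 [[idM nzM qM] prM]; split => //; split => // x.
by rewrite -qM; split => -[/c12 Hx Rx].
Qed.

Lemma top_full R F : subring R -> subset F R -> ffg R F ->
  subset (colon R F) R -> seteq (top R F) (top R R).
Proof.
move=> HR FR fF colF x; split.
  by move=> [G [fG GF Gx]]; exists G; split => // g /GF /FR.
move=> [G [fG GR Gx]]; exists F; split => // y Hy.
by apply: Gx => g Gg; apply: subringM (GR _ Gg) => //; apply: colF.
Qed.

Lemma colon_sub_of_top_full R F : subring R -> seteq (top R F) (top R R) ->
  subset (colon R F) R.
Proof.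
move=> HR full y Hy.
have [G [_ GF G1]] : top R F 1.
  apply/full; exists R; split => //; first exact: ffg_ring.
  by move=> z Hz; rewrite mul1r -[z]mulr1; apply: Hz; apply: subring1.
by rewrite -[y]mul1r; apply: G1 => g /GF; apply: Hy.
Qed.

Lemma colon_sub_of_star1 D st F : subring D -> semistar D st -> seteq (st D) D ->
  Fbar D F -> st F 1 -> subset (colon D F) D.
Proof.
move=> HD Hst stD FF F1 y Hy; have [-> | yn] := eqVneq y 0; first exact: subring0.
have yFD : subset (scale y F) D by move=> _ [f [Ff ->]]; apply: Hy.
apply/stD; apply: (star_mono Hst (Fbar_scale yn FF) (Fbar_ring HD) yFD).
by apply/(star_scale Hst yn FF); exists 1; rewrite mulr1.
Qed.

End Divisorial.

Section Flatness.
Variable K : fieldType.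
Implicit Types (D T S F Q : K -> Prop) (st : (K -> Prop) -> K -> Prop).

Lemma ideal_contract T S Q : subring T -> subset T S -> ideal S Q -> ideal T (inter Q T).
Proof.
move=> HT TS [HQ _]; split; last by move=> x [].
split.
- by split; [apply: submodule0 HQ | apply: subring0].
- by move=> a b [Qa Ta] [Qb Tb]; split; [apply: submoduleD HQ Qa Qb | apply: subringD].
- by move=> r a Tr [Qa Ta]; split; [apply: submoduleZ HQ (TS _ Tr) Qa | apply: subringM].
Qed.

Lemma nonzero_contract D T S Q : is_quotient_field_of D -> subset D T -> subset D S ->
  submodule S Q -> nonzero Q -> nonzero (inter Q T).
Proof.
move=> qfD DT DS HQ [q [Qq qn]]; have [a [b [Da Db bn qE]]] := qfD q.
have aE : a = b * q by rewrite qE mulrCA mulfV // mulr1.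
exists a; split; last by rewrite aE mulf_neq0.
by split; [rewrite aE; apply: submoduleZ HQ (DS _ Db) Qq | apply: DT].
Qed.

Lemma linked_trans D T S st (st' st'' : (K -> Prop) -> K -> Prop) :
  subring D -> subring T -> subring S -> subset D T -> subset T S -> semistar S st'' ->
  linked T S st' st'' -> linked D T st st' -> linked D S st st''.
Proof.
move=> HD HT HS DT TS Hst'' linTS linDT F idF nzF [s Fs] stF.
have DS : subset D S by move=> x /DT /TS.
have fFT := ffg_extend HD HT DT (ex_intro _ s Fs) nzF.
have idFT : ideal T (extend T F).
  by split; [case: fFT.1 | apply: extend_min (submodule_ring HT) _ => x /idF.2 /DT].
have FTS := linTS _ idFT fFT.1.2 fFT.2 (linDT F idF nzF (ex_intro _ s Fs) stF).
have FS_FTS := star_seteq Hst'' (ffg_extend HD HS DS (ex_intro _ s Fs) nzF).1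
  (ffg_extend HT HS TS fFT.2 fFT.1.2).1 (fun x => iff_sym (extend_extend HD HT HS DT TS Fs x)).
by move=> x; split => [/FS_FTS/FTS | /FTS/FS_FTS].
Qed.

Lemma linked_contract_not_full T S (st' st'' : (K -> Prop) -> K -> Prop) Q :
  subring T -> subring S -> subset T S ->
  semistar T st' -> semistar S st'' -> linked T S st' st'' ->
  quasi_prime S (star_f S st'') Q -> ~ star_f T st' (inter Q T) 1.
Proof.
move=> HT HS TS Hst' Hst'' lin [[idQ _ qQ] prQ] [G [[FG fgG] GQT G1]].
have GT : subset G T by move=> g /GQT [].
have GS1 := lin G (conj FG.1 GT) FG.2 fgG (star_full_of1 HT Hst' FG GT G1).
apply: (prime_ideal_not1 prQ); apply/qQ; split; last exact: subring1.
exists (extend S G); split; first exact: ffg_extend HT HS TS fgG FG.2.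
  by apply: extend_min idQ.1 _ => g /GQT [].
by apply/GS1; apply: (star_ext Hst'' (Fbar_ring HS)); apply: subring1.
Qed.

Lemma flat_trans D T S st (st' st'' : (K -> Prop) -> K -> Prop) :
  subring D -> is_quotient_field_of D ->
  overring D T -> overring T S -> semistar T st' -> semistar S st'' ->
  flat T S st' st'' -> flat D T st st' -> flat D S st st''.
Proof.
move=> HD qfD [HT DT] [HS TS] Hst' Hst'' [linTS flTS] [linDT flDT].
have DS : subset D S by move=> x /DT /TS.
split; first exact: linked_trans HD HT HS DT TS Hst'' linTS linDT.
move=> Q qpQ; have [[idQ nzQ _] prQ] := qpQ.
have [M [qpM QM]] := exists_quasi_prime HT Hst' (ideal_contract HT TS idQ)
  (nonzero_contract qfD DT DS idQ.1 nzQ) (linked_contract_not_full HT HS TS Hst' Hst'' linTS qpQ).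
have Tloc : subset T (loc D (inter M D)).
  by move=> t /(sub_loc HT (prime_ideal_not1 qpM.2)) /(flDT M qpM).
move=> x; split; first by apply: loc_mono => // b Db nQb Qb; apply: nQb.
by move/(flTS Q qpQ)/(loc_sub_loc HD DT TS prQ QM Tloc).
Qed.

Lemma flat_transfer D T (st1 st2 st' : (K -> Prop) -> K -> Prop) : flat D T st2 st' ->
  (forall F, ideal D F -> nonzero F -> fin_gen D F ->
     seteq (st1 F) (st1 D) -> seteq (st2 F) (st2 D)) ->
  flat D T st1 st'.
Proof.
move=> [lin fl] full12; split => // F idF nzF fgF.
by move/full12 => -/(_ idF nzF fgF); apply: lin.
Qed.

Lemma star_full_le D F (st1 st2 : (K -> Prop) -> K -> Prop) : subring D ->
  semistar D st1 -> semistar D st2 -> le_star D (star_f D st1) (star_f D st2) ->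
  ideal D F -> nonzero F -> fin_gen D F ->
  seteq (st1 F) (st1 D) -> seteq (st2 F) (st2 D).
Proof.
move=> HD Hst1 Hst2 le12 idF nzF fgF full1; have FF : Fbar D F by split; [case: idF |].
apply: (star_full_of1 HD Hst2 FF idF.2); apply: (star_f_sub Hst2 FF); apply: (le12 F FF).
apply/(star_f_ffg Hst1 (conj FF fgF)); apply/full1.
by apply: (star_ext Hst1 (Fbar_ring HD)); apply: subring1.
Qed.

Lemma top_full_of_star_full D F st : subring D -> semistar D st -> seteq (st D) D ->
  ideal D F -> nonzero F -> fin_gen D F ->
  seteq (st F) (st D) -> seteq (top D F) (top D D).
Proof.
move=> HD Hst stD idF nzF fgF full; have FF : Fbar D F by split; [case: idF |].
apply: (top_full HD idF.2 (conj FF fgF)).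
by apply: (colon_sub_of_star1 HD Hst stD FF); apply/full/stD; apply: subring1.
Qed.

Lemma conductor_ideal T y : subring T -> ideal T (fun t => T t /\ T (t * y)).
Proof.
move=> HT; split; last by move=> x [].
split.
- by split; rewrite ?mul0r; apply: subring0.
- by move=> a b [Ta Tay] [Tb Tby]; split; rewrite ?mulrDl; apply: subringD.
- by move=> r a Tr [Ta Tay]; split; rewrite -?mulrA; apply: subringM.
Qed.

Lemma loc_of_colon D T M F (s : seq K) y : subring D -> subset D T -> prime_ideal T M ->
  seteq F (span D s) -> subset (colon D F) D ->
  {in s, forall a, loc D (inter M D) (y * a)} -> loc D (inter M D) y.
Proof.
move=> HD DT prM Fs colF ys.
have [|u [Du nMu Hu]] := @loc_common_denominator K D T M (map (fun a => y * a) s) HD DT prM.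
  by move=> _ /mapP [a Ha ->]; apply: ys.
have un : u != 0 by apply/eqP => u0; apply: nMu; rewrite u0; apply: prime_ideal0 prM.
have Duy : D (u * y).
  apply: colF => f /Fs; apply: (span_min (E := fun f => D (u * y * f)) HD).
    split=> [|a b Da Db|r a Dr Da].
    - by rewrite mulr0; apply: subring0.
    - by rewrite mulrDr; apply: subringD.
    - by rewrite mulrCA; apply: subringM.
  by move=> a Ha; rewrite -mulrA; apply: Hu; apply: map_f.
by exists (u * y), u; split => //; [case | rewrite mulrC mulKf].
Qed.

Lemma t_linked_of_loc D T : subring D -> is_quotient_field_of D -> overring D T ->
  (forall M, quasi_prime T (star_f T (top T)) M -> seteq (loc D (inter M D)) (loc T M)) ->
  linked D T (top D) (top T).
Proof.
move=> HD qfD [HT DT] flat F idF nzF [s Fs] tF.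
have FT : subset F T by move=> x /idF.2 /DT.
apply: (top_full HT (extend_min (submodule_ring HT) FT)
  (ffg_extend HD HT DT (ex_intro _ s Fs) nzF)).
move=> y Hy; apply: NNPP => nTy; pose I t := T t /\ T (t * y).
have nzI : nonzero I.
  have [a [b [Da Db bn yE]]] := qfD y; exists b; split => //.
  by split; [apply: DT | rewrite yE mulrCA mulfV // mulr1; apply: DT].
have nI1 : ~ top T I 1.
  move=> [G [_ GI G1]]; apply: nTy; rewrite -[y]mul1r.
  by apply: G1 => g /GI [_]; rewrite mulrC.
have [M [qpM0 IM]] := exists_quasi_prime HT (vop_semistar HT) (conductor_ideal y HT) nzI nI1.
have qpM := quasi_prime_seteq (fun E x => iff_sym (@star_f_top K T E x)) qpM0.
have [_ prM] := qpM.
have /(flat M qpM) [a [b [Ta Tb nMb yE]]] : loc D (inter M D) y.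
  apply: (loc_of_colon HD DT prM Fs (colon_sub_of_top_full HD tF)) => a Ha.
  apply/(flat M qpM)/(sub_loc HT (prime_ideal_not1 prM)); apply: Hy.
  by apply: mem_extend => //; apply/Fs; apply: mem_span.
have bn : b != 0 by apply/eqP => b0; apply: nMb; rewrite b0; apply: prime_ideal0 prM.
by apply: nMb; apply: IM; split => //; rewrite yE mulrCA mulfV // mulr1.
Qed.

Lemma t_flat_over_iff D T st : subring D -> is_quotient_field_of D -> overring D T ->
  semistar D st -> seteq (st D) D -> (t_flat_over D T st <-> t_flat D T).
Proof.
move=> HD qfD ovDT Hst stD; split.
  by move=> [_ fl]; split => //; apply: t_linked_of_loc.
move=> tfl; apply: flat_transfer tfl _ => F idF nzF fgF.
exact: top_full_of_star_full HD Hst stD idF nzF fgF.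
Qed.

Lemma flat_iff_linked D T S st (st' st'' : (K -> Prop) -> K -> Prop) :
  overring D T -> overring T S -> flat D S st st'' ->
  (flat T S st' st'' <-> linked T S st' st'').
Proof.
move=> [_ DT] [_ TS] [_ flDS]; split => [[] // | lin]; split => // Q qpQ x; split.
  by apply: loc_mono => // b Tb nQTb Qb; apply: nQTb.
by move/(flDS Q qpQ); apply: loc_mono => // b Db nQDb [Qb _]; apply: nQDb.
Qed.

End Flatness.

Theorem lemma4p2 (K : fieldType) (D T S : K -> Prop) :
  subring D -> is_quotient_field_of D -> overring D T -> overring T S ->
  (* (b) *)
  (forall st st' st'', semistar D st -> semistar T st' -> semistar S st'' ->
     flat T S st' st'' -> flat D T st st' -> flat D S st st'') /\
  (* (e) *)
  (forall st1 st2 st', semistar D st1 -> semistar D st2 -> semistar T st' ->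
     le_star D (star_f D st1) (star_f D st2) ->
     flat D T st2 st' -> flat D T st1 st') /\
  (* (e), "in particular" *)
  (forall st, semistar D st -> seteq (st D) D ->
     (t_flat_over D T st <-> t_flat D T)) /\
  (* (h) *)
  (forall st st' st'', semistar D st -> semistar T st' -> semistar S st'' ->
     flat D S st st'' -> (flat T S st' st'' <-> linked T S st' st'')).
Proof.
move=> HD qfD ovDT ovTS; split; [|split; [|split]].
- by move=> st st' st'' _ Hst' Hst''; apply: flat_trans.
- move=> st1 st2 st' Hst1 Hst2 _ le12 fl2; apply: flat_transfer fl2 _ => F.
  exact: star_full_le HD Hst1 Hst2 le12.
- by move=> st Hst stD; apply: t_flat_over_iff.
- by move=> st st' st'' _ _ _; apply: flat_iff_linked.
Qed.
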